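(* Let $\varrho$ be the golden mean substitution on the alphabet $\{A,B\}$, $\varrho(A)=AB$, $\varrho(B)=A$, and let $\mathcal{F}_n=\varrho^n(A)$ for $n\ge 0$ (so $\mathcal{F}_{n+1}=\mathcal{F}_n\mathcal{F}_{n-1}$ for $n\ge1$), and let $\mathcal{F}_\infty$ be the infinite Fibonacci word, the limit of $\mathcal{F}_n$ (each $\mathcal{F}_n$ being a prefix of $\mathcal{F}_{n+1}$). Let $\mathcal{S}$ be a finite subword (a block of consecutive, whole letters) of $\mathcal{F}_\infty$. Then for every $n\ge 1$ with $|\mathcal{S}|\le|\mathcal{F}_{n-1}|$, $\mathcal{S}$ occurs as a subword of the bi-infinite periodic word $\cdots\mathcal{F}_n\mathcal{F}_n\mathcal{F}_n\cdots$ obtained by repeating $\mathcal{F}_n$ periodically.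
   Context: For a finite word $w$, $|w|$ denotes its number of letters (tiles). *)

From HB Require Import structures.
From mathcomp Require Import all_boot.
Set Implicit Arguments. Unset Strict Implicit. Unset Printing Implicit Defensive.

Inductive letter := LA | LB.

Definition letter_eqb (x y : letter) : bool :=
  match x, y with LA, LA | LB, LB => true | _, _ => false end.
Lemma letter_eqP : Equality.axiom letter_eqb.
Proof. by case; case; constructor. Qed.
HB.instance Definition _ := hasDecEq.Build letter letter_eqP.

Definition rho_letter (x : letter) : seq letter :=
  match x with LA => [:: LA; LB] | LB => [:: LA] end.
Definition rho (w : seq letter) : seq letter := flatten (map rho_letter w).

Definition Fib (n : nat) : seq letter := iter n rho [:: LA].

(* infinite Fibonacci word as a function nat -> letter: its i-th letter is
   the i-th letter of F_{i+1} (which has length > i; all F_n are prefixes of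
   F_{n+1}, so this is the limit) *)
Definition Finf (i : nat) : letter := nth LA (Fib i.+1) i.

Definition subword_Finf (S : seq letter) : Prop :=
  exists k, S = [seq Finf (k + i) | i <- iota 0 (size S)].

Definition occurs_periodic (w S : seq letter) : Prop :=
  exists j, forall i, i < size S -> nth LA S i = nth LA w ((j + i) %% size w).

From mathcomp Require Import all_boot.
From mathcomp Require Import zify.
Set Implicit Arguments. Unset Strict Implicit.

(* Applying rho^n to F_m writes F_(n+m), hence every prefix of F_oo, as a
   concatenation of the blocks F_n (images of A) and F_(n-1) (images of B),
   each of which begins with F_(n-1).  A factor of length at most |F_(n-1)|
   starting inside a block b therefore lies inside b F_(n-1) deprived of its
   last letter, and for both choices of b this word is a prefix of F_n F_n.
   So the factor occurs in F_n F_n at a position smaller than |F_n|, i.e. in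
   the periodic word. *)

Lemma nth_prefix (T : eqType) (x0 : T) (s1 s2 : seq T) i :
  prefix s1 s2 -> i < size s1 -> nth x0 s1 i = nth x0 s2 i.
Proof. by move=> /prefixP[s ->] lt_i; rewrite nth_cat lt_i. Qed.

Lemma prefix_cat2l (T : eqType) (s s1 s2 : seq T) :
  prefix (s ++ s1) (s ++ s2) = prefix s1 s2.
Proof. by rewrite prefix_catr // eqxx. Qed.

Lemma nth_cat_self_mod (T : Type) (x0 : T) (s : seq T) p :
  p < size s + size s -> nth x0 (s ++ s) p = nth x0 s (p %% size s).
Proof.
move=> lt_p; rewrite nth_cat; case: ltnP => [lt_ps | le_sp].
  by rewrite modn_small.
by rewrite -[in RHS](subnK le_sp) modnDr modn_small //; lia.
Qed.

Lemma rho_cat u v : rho (u ++ v) = rho u ++ rho v.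
Proof. by rewrite /rho map_cat flatten_cat. Qed.

Lemma iter_rho_cat n u v : iter n rho (u ++ v) = iter n rho u ++ iter n rho v.
Proof. by elim: n => //= n ->; rewrite rho_cat. Qed.

Lemma iter_rho_flatten n w :
  iter n rho w = flatten [seq iter n rho [:: x] | x <- w].
Proof.
elim: w => [|x w IHw]; first by elim: n => //= n ->.
by rewrite -cat1s iter_rho_cat IHw.
Qed.

Definition Fib_block n (x : letter) : seq letter :=
  if x is LA then Fib n else Fib n.-1.

Lemma iter_rho_letter n x : 0 < n -> iter n rho [:: x] = Fib_block n x.
Proof. by case: n => // n _; case: x => //; rewrite iterSr. Qed.

Lemma Fib_addn n m : 0 < n -> Fib (n + m) = flatten (map (Fib_block n) (Fib m)).
Proof.
move=> n_gt0; rewrite /Fib iterD iter_rho_flatten; congr flatten.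
by apply: eq_map => x; apply: iter_rho_letter.
Qed.

Lemma Fib_SS n : Fib n.+2 = Fib n.+1 ++ Fib n.
Proof. by rewrite -addn1 Fib_addn //= cats0. Qed.

Lemma prefix_Fib m n : m <= n -> prefix (Fib m) (Fib n).
Proof.
apply: (@homo_leq _ Fib (fun s1 s2 => prefix s1 s2) (@prefix_refl _)).
  by move=> s2 s1 s3; apply: prefix_trans.
by case=> [|i] //; rewrite Fib_SS prefix_prefix.
Qed.

Lemma size_Fib_gt0 n : 0 < size (Fib n).
Proof. exact: (size_prefix (prefix_Fib (leq0n n))). Qed.

Lemma size_Fib_gt n : n < size (Fib n.+1).
Proof.
elim: n => // n IHn; rewrite Fib_SS size_cat.
by have := size_Fib_gt0 n; lia.
Qed.

Lemma Finf_nth N i : i < N -> Finf i = nth LA (Fib N) i.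
Proof. by move=> lt_iN; apply: nth_prefix (size_Fib_gt i); apply: prefix_Fib. Qed.

Lemma prefix_Fib_pred_block n x : prefix (Fib n.-1) (Fib_block n x).
Proof. by case: x; rewrite ?prefix_refl // prefix_Fib // leq_pred. Qed.

Lemma prefix_block_Fib n x : prefix (Fib_block n x) (Fib n).
Proof. by case: x; rewrite ?prefix_refl // prefix_Fib // leq_pred. Qed.

(* The last letter must be dropped only for n <= 2, e.g. F_0 F_0 = AA is not a
   prefix of F_1 F_1 = ABAB. *)
Lemma prefix_block_cat_Fib_pred n x : 0 < n ->
  prefix (take (size (Fib_block n x) + size (Fib n.-1)).-1 (Fib_block n x ++ Fib n.-1))
         (Fib n ++ Fib n).
Proof.
case: x => /= [_|].
  apply: prefix_trans (prefix_take _ _) _.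
  by rewrite prefix_cat2l prefix_Fib // leq_pred.
case: n => [|[|[|m]]] // _; apply: prefix_trans (prefix_take _ _) _.
rewrite [Fib m.+3]Fib_SS -catA prefix_cat2l [Fib m.+2]Fib_SS prefix_cat2l.
by apply/prefix_catl/prefix_catl/prefix_Fib.
Qed.

Lemma Fib_blocks_window n w k l : 0 < n -> l <= size (Fib n.-1) ->
  k + l <= size (flatten (map (Fib_block n) w)) ->
  exists2 j, j < size (Fib n) & forall i, i < l ->
    nth LA (flatten (map (Fib_block n) w)) (k + i) = nth LA (Fib n ++ Fib n) (j + i).
Proof.
move=> n_gt0 le_lL; elim: w k => [|x w IHw] k /=.
  rewrite leqn0 addn_eq0 => /andP[_ /eqP ->].
  by exists 0 => //; apply: size_Fib_gt0.
set b := Fib_block n x; set u := flatten _ in IHw *; rewrite size_cat => le_klbu.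
case: (leqP (size b) k) => [le_bk | lt_kb].
  have [|j lt_jn Hj] := IHw (k - size b); first by lia.
  exists j => // i lt_il; rewrite nth_cat ltnNge (leq_trans le_bk (leq_addr _ _)) /=.
  by rewrite -Hj // addnBAC.
exists k => [|i lt_il]; first exact: leq_trans lt_kb (size_prefix (prefix_block_Fib n x)).
have lt_kib : k + i < (size b + size (Fib n.-1)).-1 by lia.
rewrite -(nth_prefix _ (prefix_block_cat_Fib_pred x n_gt0)) -/b; last first.
  by rewrite size_takel // size_cat leq_pred.
rewrite nth_take //.
case: w {IHw} @u le_klbu => [|y w] /= le_klbu.
  have lt_ki_b : k + i < size b by lia.
  by rewrite !nth_cat lt_ki_b.
apply/esym/nth_prefix; last by rewrite size_cat (leq_trans lt_kib (leq_pred _)).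
by rewrite prefix_cat2l prefix_catl // prefix_Fib_pred_block.
Qed.

Theorem lemma3p6 (S : seq letter) (n : nat) :
  subword_Finf S -> 1 <= n -> size S <= size (Fib n.-1) ->
  occurs_periodic (Fib n) S.
Proof.
move=> [k defS] n_gt0 le_SL; set N := k + size S.
have le_Nn : N <= size (Fib (n + N)).
  have /size_prefix le_F : prefix (Fib N.+1) (Fib (n + N)) by apply: prefix_Fib; lia.
  exact: ltnW (leq_trans (size_Fib_gt N) le_F).
rewrite (Fib_addn N n_gt0) in le_Nn.
have [j lt_jn Hj] := Fib_blocks_window n_gt0 le_SL le_Nn.
exists j => i lt_iS.
have le_Ln : size (Fib n.-1) <= size (Fib n) := size_prefix (prefix_Fib (leq_pred n)).
rewrite -nth_cat_self_mod; last by lia.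
rewrite -Hj // -Fib_addn // defS (nth_map 0) ?size_iota // nth_iota // add0n.
by apply: Finf_nth; lia.
Qed.
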